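(* Let $X$ be a set with at least four elements and let $\Lambda$ be a nontrivial finite distributive lattice. Then there exists an idempotent $e$ in the monoid $\Lambda^{X\times X}$ of $\Lambda$-generalized correspondences on $X$ such that the monoid $e\,\Lambda^{X\times X} e$ is isomorphic to the monoid of binary relations on a set of four elements.
   Context: A $\Lambda$-generalized correspondence on $X$ is a function $X\times X\to\Lambda$. The product of two such, $R$ and $S$, is defined by $RS(x,z)=\bigvee_{y\in X} R(x,y)\wedge S(y,z)$ for all $x,z\in X$; with this product the set $\Lambda^{X\times X}$ of all $\Lambda$-generalized correspondences is a monoid. The monoid of binary relations on a set $Y$ is the set of all subsets of $Y\times Y$ under composition of relations. Nontrivial means $\Lambda$ has more than one element. For an idempotent $e$, $eMe=\{eme : m\in M\}$ is a monoid with identity $e$. *)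

From HB Require Import structures.
From mathcomp Require Import all_boot all_order.
From mathcomp Require Import boolp.
Set Implicit Arguments. Unset Strict Implicit. Unset Printing Implicit Defensive.
Import Order.TTheory.
Local Open Scope order_scope.

Definition gcorr (X : Type) d (L : finTBDistrLatticeType d) := X -> X -> L.

(* Product: RS(x,z) = \/_{y in X} R(x,y) /\ S(y,z).  Since L is finite, this
   (possibly infinite) join is the finite join of the set of values
   {R(x,y) /\ S(y,z) | y in X}. *)
Definition gprod (X : Type) d (L : finTBDistrLatticeType d)
  (R S : gcorr X L) : gcorr X L :=
  fun x z => \join_(l : L | `[< exists y : X, l = R x y `&` S y z >]) l.

Definition in_corner (X : Type) d (L : finTBDistrLatticeType d)
  (e m : gcorr X L) : Prop :=
  exists m' : gcorr X L, m = gprod (gprod e m') e.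

Definition relcomp4 (R S : rel 'I_4) : rel 'I_4 :=
  fun x z => [exists y, R x y && S y z].
Definition relid4 : rel 'I_4 := fun x y => x == y.

Definition corner_iso_rel4 (X : Type) d (L : finTBDistrLatticeType d)
  (e : gcorr X L) : Prop :=
  exists (f : gcorr X L -> rel 'I_4) (g : rel 'I_4 -> gcorr X L),
    [/\ (forall r, in_corner e (g r)),
        (forall r, f (g r) = r),
        (forall m, in_corner e m -> g (f m) = m),
        (forall m n, in_corner e m -> in_corner e n ->
            f (gprod m n) = relcomp4 (f m) (f n))
      & f e = relid4].

(* Pick an atom [a] of [L] and an injection [x] of a four-element set [I]
   into [X].  A relation [r] on [I] yields the correspondence taking the
   value [a] at [(x i, x j)] when [r i j] holds, and [\bot] elsewhere; these
   correspondences multiply like the relations they come from, because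
   [a `&` a = a].  The correspondence [e] of the diagonal relation is then an
   idempotent, and since [a] is an atom, [a `&` t] is either [a] or [\bot],
   so [e m e] is always the correspondence of a relation on [I]. *)
From mathcomp Require Import all_boot all_order boolp.
Set Implicit Arguments. Unset Strict Implicit. Unset Printing Implicit Defensive.
Import Order.TTheory.
Local Open Scope order_scope.

Section Atom.
Variables (d : Order.disp_t) (L : finTBLatticeType d).

Definition atom (a : L) := a != \bot /\ forall b, b < a -> b = \bot.

Lemma exists_atom : 1 < #|L| -> exists a, atom a.
Proof.
move=> hL; have [a0 a0_neq0] : exists a0 : L, a0 != \bot.
  apply/existsP; apply: contraLR hL; rewrite negb_exists => /forallP all0.
  rewrite -leqNgt -(card1 (\bot : L)); apply/subset_leq_card/subsetP => b _.
  by rewrite inE; apply/negPn/all0.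
pose nbelow (b : L) := #|[pred c | c < b]|.
have [a a_neq0 a_min] := @arg_minnP _ a0 (fun b => b != \bot) nbelow a0_neq0.
exists a; split=> // b lt_ba; apply/eqP/negPn/negP => b_neq0.
have := a_min b b_neq0; rewrite leqNgt => /negP; apply; apply/proper_card.
apply/properP; split; last by exists b; rewrite !inE ?ltxx.
by apply/subsetP => c; rewrite !inE => /lt_trans; apply.
Qed.

Lemma atom_meet a t : atom a -> a `&` t = if a <= t then a else \bot.
Proof.
case=> _ a_min; case: ifPn => [/meet_idPl //|a_nle_t].
apply: a_min; rewrite lt_neqAle leIl andbT.
by apply: contraNneq a_nle_t => <-; apply: leIr.
Qed.

End Atom.

Definition rel_comp (I : finType) (r s : rel I) : rel I :=
  fun i k => [exists j, r i j && s j k].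

Lemma rel_comp_eql (I : finType) (r : rel I) : rel_comp (fun i j => i == j) r = r.
Proof.
apply/funext => i; apply/funext => k; apply/existsP/idP => [[j /andP[/eqP -> //]]|].
by exists i; rewrite eqxx.
Qed.

Lemma rel_comp_eqr (I : finType) (r : rel I) : rel_comp r (fun i j => i == j) = r.
Proof.
apply/funext => i; apply/funext => k; apply/existsP/idP => [[j /andP[+ /eqP <-]] //|].
by exists k; rewrite eqxx andbT.
Qed.

Section Product.
Variables (X : Type) (d : Order.disp_t) (L : finTBDistrLatticeType d).
Implicit Types R S : gcorr X L.

Lemma gprod_ub R S x y z : R x y `&` S y z <= gprod R S x z.
Proof. by apply: (joins_sup (j := R x y `&` S y z)); apply/asboolP; exists y. Qed.

Lemma gprod_lub R S x z c :
  (forall y, R x y `&` S y z <= c) -> gprod R S x z <= c.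
Proof. by move=> ub; apply/joinsP => _ /asboolP[y ->]. Qed.

Lemma gprod_botl R S x z : (forall y, R x y = \bot) -> gprod R S x z = \bot.
Proof.
by move=> R0; apply/eqP; rewrite -lex0; apply: gprod_lub => y; rewrite R0 meet0x.
Qed.

Lemma gprod_botr R S x z : (forall y, S y z = \bot) -> gprod R S x z = \bot.
Proof.
by move=> S0; apply/eqP; rewrite -lex0; apply: gprod_lub => y; rewrite S0 meetx0.
Qed.

End Product.

Section Corner.
Variables (X : Type) (d : Order.disp_t) (L : finTBDistrLatticeType d).
Variables (I : finType) (x : I -> X) (a : L).
Hypothesis x_inj : injective x.

Definition corr_of_rel (r : rel I) : gcorr X L :=
  fun z w => if `[< exists i j, [/\ z = x i, w = x j & r i j] >] then a else \bot.

Definition rel_of_corr (m : gcorr X L) : rel I := fun i j => m (x i) (x j) == a.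

Local Notation diag := (corr_of_rel (fun i j => i == j)).

Lemma corr_of_relE r i j : corr_of_rel r (x i) (x j) = if r i j then a else \bot.
Proof.
rewrite /corr_of_rel; case: asboolP => [[i' [j' [/x_inj <- /x_inj <- ->]]] //|no].
by case: ifP => // rij; case: no; exists i, j.
Qed.

Lemma corr_of_rel_outl r z w : ~ (exists i, z = x i) -> corr_of_rel r z w = \bot.
Proof.
move=> zout; rewrite /corr_of_rel; case: asboolP => // [[i [j [zi _ _]]]].
by case: zout; exists i.
Qed.

Lemma corr_of_rel_outr r z w : ~ (exists j, w = x j) -> corr_of_rel r z w = \bot.
Proof.
move=> wout; rewrite /corr_of_rel; case: asboolP => // [[i [j [_ wj _]]]].
by case: wout; exists j.
Qed.

Lemma gprod_corr_of_rel r s :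
  gprod (corr_of_rel r) (corr_of_rel s) = corr_of_rel (rel_comp r s).
Proof.
apply/funext => z; apply/funext => w.
have [[i ->]|zout] := pselect (exists i, z = x i); last first.
  by rewrite corr_of_rel_outl // gprod_botl // => y; apply: corr_of_rel_outl.
have [[k ->]|wout] := pselect (exists k, w = x k); last first.
  by rewrite corr_of_rel_outr // gprod_botr // => y; apply: corr_of_rel_outr.
apply/le_anti/andP; split.
  apply: gprod_lub => y; have [[j ->]|yout] := pselect (exists j, y = x j); last first.
    by rewrite corr_of_rel_outr // meet0x le0x.
  rewrite !corr_of_relE; case: ifP => rij; last by rewrite meet0x le0x.
  case: ifP => sjk; last by rewrite meetx0 le0x.
  by rewrite meetxx ifT //; apply/existsP; exists j; rewrite rij.
rewrite corr_of_relE; case: ifP => [/existsP[j /andP[rij sjk]]|_]; last exact: le0x.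
by apply: le_trans (gprod_ub _ _ _ (x j) _); rewrite !corr_of_relE rij sjk meetxx.
Qed.

Lemma gprod_diagl m z w :
  gprod diag m z w = if `[< exists i, z = x i >] then a `&` m z w else \bot.
Proof.
case: asboolP => [[i ->]|zout]; last first.
  by rewrite gprod_botl // => y; apply: corr_of_rel_outl.
apply/le_anti/andP; split.
  apply: gprod_lub => y; have [[j ->]|yout] := pselect (exists j, y = x j).
    by rewrite corr_of_relE; case: eqP => [<-|_]; rewrite ?meet0x ?le0x.
  by rewrite corr_of_rel_outr // meet0x le0x.
by apply: le_trans (gprod_ub _ _ _ (x i) _); rewrite corr_of_relE eqxx.
Qed.

Lemma gprod_diagr m z w :
  gprod m diag z w = if `[< exists j, w = x j >] then m z w `&` a else \bot.
Proof.
case: asboolP => [[j ->]|wout]; last first.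
  by rewrite gprod_botr // => y; apply: corr_of_rel_outr.
apply/le_anti/andP; split.
  apply: gprod_lub => y; have [[i ->]|yout] := pselect (exists i, y = x i).
    by rewrite corr_of_relE; case: eqP => [->|_]; rewrite ?meetx0 ?le0x.
  by rewrite corr_of_rel_outl // meetx0 le0x.
by apply: le_trans (gprod_ub _ _ _ (x j) _); rewrite corr_of_relE eqxx.
Qed.

Hypothesis a_atom : atom a.

Lemma corr_of_relK : cancel corr_of_rel rel_of_corr.
Proof.
move=> r; apply/funext => i; apply/funext => j; rewrite /rel_of_corr corr_of_relE.
by case: (r i j); rewrite ?eqxx // eq_sym; apply/negbTE; case: a_atom.
Qed.

Lemma gprod_diag_corner m :
  gprod (gprod diag m) diag = corr_of_rel (fun i j => a <= m (x i) (x j)).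
Proof.
apply/funext => z; apply/funext => w; rewrite gprod_diagr gprod_diagl.
case: asboolP => [[j ->]|wout]; last by rewrite corr_of_rel_outr.
case: asboolP => [[i ->]|zout]; last by rewrite meet0x corr_of_rel_outl.
by rewrite corr_of_relE meetAC meetxx atom_meet.
Qed.

Lemma in_corner_diagP m : in_corner diag m -> exists r, m = corr_of_rel r.
Proof. by case=> m' ->; rewrite gprod_diag_corner; eexists. Qed.

Lemma in_corner_diag_corr_of_rel r : in_corner diag (corr_of_rel r).
Proof.
by exists (corr_of_rel r); rewrite !gprod_corr_of_rel rel_comp_eql rel_comp_eqr.
Qed.

End Corner.

Theorem lemma10 (X : Type) (d : Order.disp_t) (L : finTBDistrLatticeType d)
  (hX : exists x : 'I_4 -> X, injective x)
  (hL : 1 < #|L|) :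
  exists e : gcorr X L, gprod e e = e /\ corner_iso_rel4 e.
Proof.
have [x x_inj] := hX; have [a a_atom] := exists_atom hL.
pose corr := corr_of_rel x a; pose rel := rel_of_corr x a.
have corrK : cancel corr rel by exact: corr_of_relK.
have cornerP := in_corner_diagP x_inj a_atom.
exists (corr (fun i j => i == j)); split.
  by rewrite gprod_corr_of_rel // rel_comp_eql.
exists rel, corr; split.
- exact: in_corner_diag_corr_of_rel.
- exact: corrK.
- by move=> m /cornerP[r ->]; rewrite corrK.
- move=> m n /cornerP[r ->] /cornerP[s ->].
  by rewrite gprod_corr_of_rel // !corrK.
- exact: corrK.
Qed.
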